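(* Let $K$ be a field, $w(x)\in K[x]$ with $d=\deg w\ge2$, $W=K[w(x)]\subseteq K[x]$, and $U$ the $K$-subspace of $K[x]$ spanned by $x^m$ for positive integers $m$ not divisible by $d$. Every $f\in K[x]$ can be written uniquely as $f=f_1+f_2$ with $f_1\in U$, $f_2\in W$; set $\ell(f)=\deg f_1$ if $f_1\ne0$ and $\ell(f)=0$ otherwise. Then: 1) $\deg f\ge \ell(f)$ for all nonzero $f\in K[x]$; 2) for all $f,g\in K[x]$ with $f-g\in W$, we have $\ell(f)=\ell(g)$. *)

From HB Require Import structures.
From mathcomp Require Import all_boot all_order all_algebra.
Set Implicit Arguments. Unset Strict Implicit. Unset Printing Implicit Defensive.
Import Order.TTheory GRing.Theory Num.Theory.
Local Open Scope ring_scope.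

(* degree of a polynomial (deg 0 := 0 by convention here; only used for f <> 0) *)
Definition pdeg (K : fieldType) (f : {poly K}) : nat := (size f).-1.

Definition inW (K : fieldType) (w f : {poly K}) : Prop :=
  exists q : {poly K}, f = q \Po w.

(* U = span_K { x^m : m >= 1, d does not divide m }, d = deg w :
   a polynomial lies in U iff its coefficients at every index divisible
   by d (including index 0) vanish. *)
Definition inU (K : fieldType) (w f : {poly K}) : Prop :=
  forall i : nat, (pdeg w %| i)%N -> f`_i = 0.

Definition ell_of (K : fieldType) (f1 : {poly K}) : nat :=
  if f1 == 0 then 0%N else pdeg f1.

Definition Ucomp (K : fieldType) (w f f1 : {poly K}) : Prop :=
  inU w f1 /\ inW w (f - f1).

From HB Require Import structures.
From mathcomp Require Import all_boot all_order all_algebra.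
Import Order.TTheory GRing.Theory Num.Theory.
Local Open Scope ring_scope.

(** For every n, K[x] contains a polynomial of degree n lying in U or in W:
    x^n when d does not divide n, and w^k = x^k o w when n = k d.  Subtracting a
    multiple of it cancels the leading term of f, so induction on the degree
    decomposes f as f1 + f2 with deg f1 <= deg f.  A nonzero element q(w) of W
    has degree deg q * d, a multiple of d, so its leading coefficient sits at
    an index where every element of U vanishes: U and W meet trivially and
    the decomposition is unique.  Adding an element of W to f changes only
    f2, so ell(f) depends only on f modulo W. *)

Lemma size_sub_lead (K : fieldType) (p q : {poly K}) :
  size q = size p -> (0 < size p)%N ->
  (size (p - (lead_coef p / lead_coef q) *: q)%R < size p)%N.
Proof.
move=> size_q p_gt0; rewrite -(prednK p_gt0) ltnS.
apply/leq_sizeP => j; rewrite leq_eqVlt => /predU1P [<- | lt_j].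
  have lq_nz : lead_coef q != 0 by rewrite lead_coef_eq0 -size_poly_gt0 size_q.
  have coef_q : q`_(size p).-1 = lead_coef q by rewrite /lead_coef size_q.
  by rewrite coefB coefZ coef_q divfK // subrr.
rewrite prednK // in lt_j.
by rewrite coefB coefZ !nth_default ?size_q // mulr0 subrr.
Qed.

Section Decomposition.
Set Implicit Arguments.
Unset Strict Implicit.

Variables (K : fieldType) (w : {poly K}).

Lemma inW0 : inW w 0.
Proof. by exists 0; rewrite comp_poly0. Qed.

Lemma inWD f g : inW w f -> inW w g -> inW w (f + g).
Proof. by move=> [p ->] [q ->]; exists (p + q); rewrite comp_polyD. Qed.

Lemma inWB f g : inW w f -> inW w g -> inW w (f - g).
Proof. by move=> [p ->] [q ->]; exists (p - q); rewrite comp_polyB. Qed.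

Lemma inWZ c f : inW w f -> inW w (c *: f).
Proof. by move=> [p ->]; exists (c *: p); rewrite comp_polyZ. Qed.

Lemma inU0 : inU w 0.
Proof. by move=> i _; rewrite coef0. Qed.

Lemma inUD f g : inU w f -> inU w g -> inU w (f + g).
Proof. by move=> fU gU i di; rewrite coefD fU ?gU ?addr0. Qed.

Lemma inUB f g : inU w f -> inU w g -> inU w (f - g).
Proof. by move=> fU gU i di; rewrite coefB fU ?gU ?subr0. Qed.

Lemma inUZ c f : inU w f -> inU w (c *: f).
Proof. by move=> fU i di; rewrite coefZ fU ?mulr0. Qed.

Lemma inUXn n : ~~ (pdeg w %| n)%N -> inU w 'X^n.
Proof. by move=> ndvd i di; rewrite coefXn; case: eqP => // ei; rewrite -ei di in ndvd. Qed.

Lemma inU_inW_eq0 h : inU w h -> inW w h -> h = 0.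
Proof.
move=> hU [q def_h]; apply/eqP; apply: contraT => h_nz.
have := h_nz; rewrite -lead_coef_eq0 /lead_coef hU ?eqxx //.
by rewrite def_h size_comp_poly dvdn_mull.
Qed.

Lemma Ucomp_uniq f f1 g1 : Ucomp w f f1 -> Ucomp w f g1 -> f1 = g1.
Proof.
move=> [f1U f1W] [g1U g1W]; apply/esym/subr0_eq/inU_inW_eq0; first exact: inUB.
by have := inWB f1W g1W; rewrite opprB addrC addrA subrK.
Qed.

Lemma Ucomp_addU g g1 h : Ucomp w g g1 -> inU w h -> Ucomp w (g + h) (g1 + h).
Proof.
by move=> [g1U g1W] hU; split; [exact: inUD | rewrite opprD addrACA subrr addr0].
Qed.

Lemma Ucomp_addW g g1 h : Ucomp w g g1 -> inW w h -> Ucomp w (g + h) g1.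
Proof. by move=> [g1U g1W] hW; split; rewrite // addrAC; exact: inWD. Qed.

Hypothesis w_nonconst : (1 < size w)%N.

Lemma exists_inU_inW_of_size n :
  exists2 q : {poly K}, size q = n.+1 & inU w q \/ inW w q.
Proof.
have [/dvdnP [k ->] | ndvd] := boolP (pdeg w %| n)%N; last first.
  by exists 'X^n; [rewrite size_polyXn | left; exact: inUXn].
exists ('X^k \Po w); last by right; exists 'X^k.
have size_gt0 : (0 < size ('X^k \Po w))%N.
  by rewrite size_poly_gt0 comp_poly_eq0 // monic_neq0 ?monicXn.
by rewrite -(prednK size_gt0) size_comp_poly size_polyXn.
Qed.

Lemma Ucomp_exists f : exists2 f1, Ucomp w f f1 & (size f1 <= size f)%N.
Proof.
elim: {f}(size f) {-2}f (leqnn (size f)) => [|n IHn] f size_f.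
  move: size_f; rewrite size_poly_leq0 => /eqP ->.
  by exists 0; [split; [exact: inU0 | rewrite subr0; exact: inW0] | rewrite size_poly0].
have [|lt_n_f] := leqP (size f) n; first exact: IHn.
have {lt_n_f}size_f : size f = n.+1 by apply/eqP; rewrite eqn_leq size_f.
have [q size_q q_UW] := exists_inU_inW_of_size n.
set c := lead_coef f / lead_coef q; set g := f - c *: q.
have lt_g_f : (size g < size f)%N by rewrite size_sub_lead ?size_f ?size_q.
have [|g1 g_g1 size_g1] := IHn g; first by rewrite -ltnS -size_f.
have size_g1_f : (size g1 <= size f)%N := leq_trans size_g1 (ltnW lt_g_f).
have def_f : f = g + c *: q by rewrite subrK.
case: q_UW => [qU | qW].
  exists (g1 + c *: q); first by rewrite def_f; exact: Ucomp_addU g_g1 (inUZ c qU).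
  rewrite (leq_trans (size_polyD _ _)) // geq_max size_g1_f.
  by rewrite (leq_trans (size_scale_leq _ _)) // size_q size_f.
by exists g1; rewrite // def_f; exact: Ucomp_addW g_g1 (inWZ c qW).
Qed.

End Decomposition.

Theorem lemma3p8 (K : fieldType) (w : {poly K}) (hd : (2 <= pdeg w)%N) :
  (* unique decomposition f = f1 + f2, f1 in U, f2 in W *)
  (forall f : {poly K}, exists f1, Ucomp w f f1 /\
      forall g1, Ucomp w f g1 -> g1 = f1) /\
  (* 1) deg f >= ell(f) for f <> 0 *)
  (forall f f1 : {poly K}, f != 0 -> Ucomp w f f1 ->
      (ell_of f1 <= pdeg f)%N) /\
  (* 2) f - g in W implies ell(f) = ell(g) *)
  (forall f g f1 g1 : {poly K}, inW w (f - g) ->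
      Ucomp w f f1 -> Ucomp w g g1 -> ell_of f1 = ell_of g1).
Proof.
have w_nonconst : (1 < size w)%N by apply: leq_trans hd (leq_pred _).
split; [|split].
- move=> f; have [f1 f_f1 _] := Ucomp_exists w_nonconst f.
  by exists f1; split=> // g1 /(Ucomp_uniq f_f1).
- move=> f f1 _ f_f1; have [e1 f_e1 size_e1] := Ucomp_exists w_nonconst f.
  rewrite (Ucomp_uniq f_f1 f_e1) /ell_of; case: eqP => // _.
  by rewrite /pdeg -!subn1 leq_sub2r.
- move=> f g f1 g1 fgW f_f1 g_g1; congr ell_of; apply: Ucomp_uniq f_f1 _.
  by have := Ucomp_addW g_g1 fgW; rewrite addrC subrK.
Qed.
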